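(* In the setting described in the context, let $(x^k)$, $(\bar x^k)$, $(\alpha_k)$ be the sequences generated by the Conceptual Algorithm (with either Method 1 or Method 2). Then for every $k$ for which these are defined: (i) $\dfrac{x^k-\bar x^k}{\alpha_k}-(A_2x^k-A_2\bar x^k)\in (A_2+B)\bar x^k+A_1x^k$; (ii) $\operatorname{zer}(A+B)\subseteq T_k$.
   Context: Let $\mathcal H$ be a real Hilbert space with inner product $\langle\cdot,\cdot\rangle$ and norm $\|\cdot\|$. Let $A_1:\mathcal H\to\mathcal H$ be $\beta$-cocoercive for some $\beta>0$ (i.e. $\langle A_1x-A_1y,x-y\rangle\ge\beta\|A_1x-A_1y\|^2$ for all $x,y$), let $A_2:\mathcal H\to\mathcal H$ be maximally monotone and uniformly continuous, let $B:\mathcal H\rightrightarrows\mathcal H$ be maximally monotone, and set $A:=A_1+A_2$. Assume $\operatorname{zer}(A+B):=\{x:0\in Ax+Bx\}\neq\emptyset$. $J_{\alpha B}:=(I+\alpha B)^{-1}$ for $\alpha>0$, and $P_C$ denotes the orthogonal projection onto a nonempty closed convex set $C$. Fix $\theta,\delta\in(0,1)$, $\bar\delta>0$ with $1-\delta-\bar\delta>0$, and $\alpha_{-1}>0$ with $\alpha_{-1}\le4\beta\bar\delta$. Conceptual Algorithm: pick $x^0\in\mathcal H$. Given $x^k$ and $\alpha_{k-1}$, for $j\in\mathbb N$ let $\bar x^k_j:=J_{\alpha_{k-1}\theta^jB}(x^k-\alpha_{k-1}\theta^jAx^k)$ and let $j(k)$ be the smallest $j\in\mathbb N$ with $\alpha_{k-1}\theta^j\langle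 A_2x^k-A_2\bar x^k_j,x^k-\bar x^k_j\rangle\le\delta\|x^k-\bar x^k_j\|^2$. Set $\alpha_k:=\alpha_{k-1}\theta^{j(k)}$, $\bar x^k:=J_{\alpha_kB}(x^k-\alpha_kAx^k)$, $r_k:=\frac{\bar\delta}{\alpha_k}\|x^k-\bar x^k\|^2$, $T_k:=\{x\in\mathcal H:\langle \frac{x^k-\bar x^k}{\alpha_k}-(A_2x^k-A_2\bar x^k),x-\bar x^k\rangle\le r_k\}$ and $\Gamma_k:=\{x\in\mathcal H:\langle x^0-x^k,x-x^k\rangle\le0\}$. Method 1 sets $x^{k+1}:=P_{T_k}(x^k)$; Method 2 sets $x^{k+1}:=P_{T_k\cap\Gamma_k}(x^0)$. The algorithm stops if $x^{k+1}=x^k$. *)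

From mathcomp Require Import all_boot all_order all_algebra.
From mathcomp Require Import reals.
Set Implicit Arguments. Unset Strict Implicit. Unset Printing Implicit Defensive.
Import Order.TTheory GRing.Theory Num.Theory.
Local Open Scope ring_scope.

Section Hilbert.
Variables (R : realType) (V : lmodType R) (ip : V -> V -> R).

Definition inner_product : Prop :=
  [/\ (forall x y, ip x y = ip y x),
      (forall a x y z, ip (a *: x + y) z = a * ip x z + ip y z)
    & (forall x, x != 0 -> 0 < ip x x)].

Definition hnorm (x : V) : R := Num.sqrt (ip x x).

Definition hcomplete : Prop :=
  forall u : nat -> V,
    (forall e, 0 < e -> exists N, forall m n, (N <= m)%N -> (N <= n)%N ->
         hnorm (u m - u n) < e) ->
    exists l, forall e, 0 < e -> exists N, forall n, (N <= n)%N ->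
         hnorm (u n - l) < e.

Definition hilbert : Prop := inner_product /\ hcomplete.

(* set-valued operators are relations: M x y  <->  y \in M x *)
Definition monotone_rel (M : V -> V -> Prop) : Prop :=
  forall x y u v, M x u -> M y v -> 0 <= ip (x - y) (u - v).

Definition maximally_monotone (M : V -> V -> Prop) : Prop :=
  monotone_rel M /\
  (forall x u, (forall y v, M y v -> 0 <= ip (x - y) (u - v)) -> M x u).

Definition graph (F : V -> V) : V -> V -> Prop := fun x y => y = F x.

Definition cocoercive (beta : R) (F : V -> V) : Prop :=
  forall x y, ip (F x - F y) (x - y) >= beta * (hnorm (F x - F y)) ^+ 2.

Definition uniformly_continuous (F : V -> V) : Prop :=
  forall e, 0 < e -> exists d, 0 < d /\
    forall x y, hnorm (x - y) < d -> hnorm (F x - F y) < e.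

Definition zer (A : V -> V) (B : V -> V -> Prop) (x : V) : Prop :=
  exists b, B x b /\ A x + b = 0.

(* p = J_{g B}(u)  <->  u \in (I + g B) p *)
Definition is_resolvent (B : V -> V -> Prop) (g : R) (u p : V) : Prop :=
  exists b, B p b /\ u = p + g *: b.

Definition is_proj (C : V -> Prop) (u p : V) : Prop :=
  C p /\ forall y, C y -> hnorm (u - p) <= hnorm (u - y).

Definition Tset (A2 : V -> V) (dbar : R) (xk xbk : V) (ak : R) : V -> Prop :=
  fun y => ip (ak^-1 *: (xk - xbk) - (A2 xk - A2 xbk)) (y - xbk)
           <= dbar / ak * (hnorm (xk - xbk)) ^+ 2.

Definition Gset (x0 xk : V) : V -> Prop :=
  fun y => ip (x0 - xk) (y - xk) <= 0.

(* alpha_{k-1}, with alpha_{-1} = am1 and alpha : nat -> R indexing alpha_k *)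
Definition alpha_prev (am1 : R) (alpha : nat -> R) (k : nat) : R :=
  if k is k'.+1 then alpha k' else am1.

Definition ls_ok (A1 A2 : V -> V) (B : V -> V -> Prop) (delta : R)
    (x : V) (g : R) : Prop :=
  forall p, is_resolvent B g (x - g *: (A1 x + A2 x)) p ->
    g * ip (A2 x - A2 p) (x - p) <= delta * (hnorm (x - p)) ^+ 2.

(* The iterates x^0..x^K, \bar x^0..\bar x^K, alpha_0..alpha_K, j(0)..j(K)
   are generated by the Conceptual Algorithm (Method 1 if meth = false,
   Method 2 if meth = true), without stopping before iteration K. *)
Definition generated (A1 A2 : V -> V) (B : V -> V -> Prop)
    (theta delta dbar am1 : R) (meth : bool)
    (x xbar : nat -> V) (alpha : nat -> R) (j : nat -> nat) (K : nat) : Prop :=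
  (forall k, (k <= K)%N ->
     [/\ ls_ok A1 A2 B delta (x k) (alpha_prev am1 alpha k * theta ^+ j k),
         (forall i, (i < j k)%N ->
            ~ ls_ok A1 A2 B delta (x k) (alpha_prev am1 alpha k * theta ^+ i)),
         alpha k = alpha_prev am1 alpha k * theta ^+ j k
       & is_resolvent B (alpha k) (x k - alpha k *: (A1 (x k) + A2 (x k)))
                      (xbar k)]) /\
  (forall k, (k < K)%N ->
     (if meth
      then is_proj (fun y => Tset A2 dbar (x k) (xbar k) (alpha k) y /\
                             Gset (x 0%N) (x k) y) (x 0%N) (x k.+1)
      else is_proj (Tset A2 dbar (x k) (xbar k) (alpha k)) (x k) (x k.+1))
     /\ x k.+1 != x k).

End Hilbert.

From mathcomp Require Import all_boot all_order all_algebra.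
From mathcomp Require Import reals.
From mathcomp Require Import lra.
Import Order.TTheory GRing.Theory Num.Theory.
Local Open Scope ring_scope.
Set Implicit Arguments.
Unset Strict Implicit.

(** Part (i) is the resolvent identity [x - a (A1 x + A2 x) = xbar + a b] with
    [b] in [B xbar], divided by [a].  For part (ii), a zero [z] gives
    [A1 z + A2 z + bz = 0] with [bz] in [B z], so the normal vector of [T_k]
    splits as [((A2 + B) xbar - (A2 + B) z) + (A1 x - A1 z)].  The first term
    pairs nonpositively with [z - xbar] by monotonicity of [A2 + B]; for the
    second, cocoercivity and Young's inequality give the bound
    [|x - xbar|^2 / (4 beta)], which is at most [dbar / a |x - xbar|^2]
    because every step size satisfies [a <= alpha_{-1} <= 4 beta dbar]. *)

Section InnerProduct.
Variables (R : realType) (V : lmodType R) (ip : V -> V -> R).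
Hypothesis ip_inner : inner_product ip.

Lemma ipC x y : ip x y = ip y x.
Proof. by case: ip_inner. Qed.

Lemma ip0l z : ip 0 z = 0.
Proof.
case: ip_inner => _ ipL _; have := ipL 1 0 0 z.
rewrite scaler0 addr0 mul1r; lra.
Qed.

Lemma ipDl x y z : ip (x + y) z = ip x z + ip y z.
Proof. by case: ip_inner => _ ipL _; rewrite -[x]scale1r ipL mul1r scale1r. Qed.

Lemma ipZl a x z : ip (a *: x) z = a * ip x z.
Proof. by case: ip_inner => _ ipL _; rewrite -[a *: x]addr0 ipL ip0l addr0. Qed.

Lemma ipNl x z : ip (- x) z = - ip x z.
Proof. by rewrite -scaleN1r ipZl mulN1r. Qed.

Lemma ipBl x y z : ip (x - y) z = ip x z - ip y z.
Proof. by rewrite ipDl ipNl. Qed.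

Lemma ipBr x y z : ip z (x - y) = ip z x - ip z y.
Proof. by rewrite ipC ipBl !(ipC z). Qed.

Lemma ipZr a x z : ip z (a *: x) = a * ip z x.
Proof. by rewrite ipC ipZl ipC. Qed.

Lemma ip_ge0 x : 0 <= ip x x.
Proof.
case: ip_inner => _ _ ip_pos.
by have [->|/ip_pos/ltW //] := eqVneq x 0; rewrite ip0l.
Qed.

Lemma hnorm_sqr x : hnorm ip x ^+ 2 = ip x x.
Proof. by rewrite /hnorm sqr_sqrtr // ip_ge0. Qed.

Lemma ip_young w d c : 0 < c -> ip w d <= c * ip w w + ip d d / (4 * c).
Proof.
move=> c_gt0.
have := ip_ge0 (2 * c *: w - d).
rewrite !(ipBl, ipBr, ipZl, ipZr) (ipC d w) => sq_ge0.
have c4_gt0 : 0 < 4 * c by rewrite mulr_gt0.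
rewrite -(ler_pM2r c4_gt0) [X in _ <= X]mulrDl divfK ?gt_eqF //; nra.
Qed.

Lemma cocoercive_ip_le (beta : R) (F : V -> V) x y d : 0 < beta ->
  cocoercive ip beta F ->
  ip (F x - F y) (d - (x - y)) <= hnorm ip d ^+ 2 / (4 * beta).
Proof.
move=> beta_gt0 coF; have := coF x y; rewrite !hnorm_sqr ipBr.
have := ip_young (F x - F y) d beta_gt0; lra.
Qed.

Lemma monotoneD_graph (F : V -> V) (M : V -> V -> Prop) x y u v :
  monotone_rel ip (graph F) -> monotone_rel ip M -> M x u -> M y v ->
  0 <= ip (x - y) (F x + u - (F y + v)).
Proof.
move=> monoF monoM Mxu Myv.
have mono_F := monoF _ _ _ _ (erefl (F x)) (erefl (F y)).
have mono_uv := monoM _ _ _ _ Mxu Myv.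
by rewrite opprD addrACA ipC ipDl -!(ipC (x - y)) addr_ge0.
Qed.

End InnerProduct.

Lemma resolvent_inclusion (R : realType) (V : lmodType R) (B : V -> V -> Prop)
    (g : R) (x u p : V) :
  g != 0 -> is_resolvent B g (x - g *: u) p ->
  exists b, B p b /\ g^-1 *: (x - p) = b + u.
Proof.
move=> g_neq0 [b [Bpb res]]; exists b; split=> //.
have -> : x - p = g *: (b + u).
  by rewrite scalerDr -[x](subrK (g *: u)) res addrAC [p + _]addrC addrK.
by rewrite scalerA mulVf // scale1r.
Qed.

Lemma step_size_bounds (R : realType) (am1 theta : R) (alpha : nat -> R)
    (j : nat -> nat) (K : nat) :
  0 < am1 -> 0 < theta <= 1 ->
  (forall k, (k <= K)%N -> alpha k = alpha_prev am1 alpha k * theta ^+ j k) ->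
  forall k, (k <= K)%N -> 0 < alpha k <= am1.
Proof.
move=> am1_gt0 /andP[theta_gt0 theta_le1] alpha_rec.
have shrink a n : 0 < a -> 0 < a * theta ^+ n <= a.
  have theta_ge0 := ltW theta_gt0.
  move=> a_gt0; rewrite mulr_gt0 ?exprn_gt0 //=.
  by rewrite ler_piMr ?exprn_ile1 // ltW.
elim=> [|k IHk] kK; rewrite alpha_rec //=; first exact: shrink.
have /andP[ak_gt0 ak_le] := IHk (ltnW kK).
by have /andP[-> /le_trans->] := shrink (alpha k) (j k.+1) ak_gt0.
Qed.

Section HalfSpace.
Variables (R : realType) (V : lmodType R) (ip : V -> V -> R).
Variables (A1 A2 : V -> V) (B : V -> V -> Prop) (beta dbar a : R).
Hypotheses (ip_inner : inner_product ip) (beta_gt0 : 0 < beta)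
  (coA1 : cocoercive ip beta A1) (monoA2 : monotone_rel ip (graph A2))
  (monoB : monotone_rel ip B) (a_gt0 : 0 < a) (a_le : a <= 4 * beta * dbar).

Lemma zer_normal_split (x xb b z bz : V) :
  A1 z + A2 z + bz = 0 ->
  A2 xb + b + A1 x = (A2 xb + b - (A2 z + bz)) + (A1 x - A1 z).
Proof.
move=> zer_z.
by rewrite [RHS]addrACA -opprD [A2 z + bz + _]addrC addrA zer_z subr0.
Qed.

Lemma zer_in_Tset (x xb b z : V) :
  B xb b -> a^-1 *: (x - xb) - (A2 x - A2 xb) = A2 xb + b + A1 x ->
  zer (fun y => A1 y + A2 y) B z -> Tset ip A2 dbar x xb a z.
Proof.
move=> Bb normal [bz [Bz zer_z]]; rewrite /Tset normal (zer_normal_split x xb b zer_z).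
have mono := monotoneD_graph ip_inner monoA2 monoB Bb Bz.
have := cocoercive_ip_le ip_inner x z (x - xb) beta_gt0 coA1.
have -> : x - xb - (x - z) = z - xb by rewrite opprB addrC addrA subrK.
move=> coco.
have coef : (4 * beta)^-1 <= dbar / a.
  by rewrite ler_pdivlMr // ler_pdivrMl ?mulr_gt0.
have flip u : ip u (z - xb) = - ip (xb - z) u.
  by rewrite (ipC ip_inner) -(ipNl ip_inner) opprB.
have := ler_wpM2l (sqr_ge0 (hnorm ip (x - xb))) coef.
rewrite (ipDl ip_inner) flip [dbar / a * _]mulrC; lra.
Qed.

End HalfSpace.

Unset Implicit Arguments.

Theorem lemma4p3 (R : realType) (V : lmodType R) (ip : V -> V -> R)
  (A1 A2 : V -> V) (B : V -> V -> Prop) (beta theta delta dbar am1 : R)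
  (meth : bool) (x xbar : nat -> V) (alpha : nat -> R) (j : nat -> nat)
  (K : nat) :
  hilbert ip ->
  0 < beta -> cocoercive ip beta A1 ->
  maximally_monotone ip (graph A2) -> uniformly_continuous ip A2 ->
  maximally_monotone ip B ->
  (exists z, zer (fun y => A1 y + A2 y) B z) ->
  0 < theta < 1 -> 0 < delta < 1 -> 0 < dbar -> 0 < 1 - delta - dbar ->
  0 < am1 -> am1 <= 4 * beta * dbar ->
  generated ip A1 A2 B theta delta dbar am1 meth x xbar alpha j K ->
  forall k, (k <= K)%N ->
    (exists b, B (xbar k) b /\
       (alpha k)^-1 *: (x k - xbar k) - (A2 (x k) - A2 (xbar k))
         = A2 (xbar k) + b + A1 (x k)) /\
    (forall z, zer (fun y => A1 y + A2 y) B z ->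
       Tset ip A2 dbar (x k) (xbar k) (alpha k) z).
Proof.
move=> [ip_inner _] beta_gt0 coA1 [monoA2 _] _ [monoB _] _ /andP[theta_gt0 theta_lt1]
  _ _ _ am1_gt0 am1_le [steps _] k kK.
have theta_in : 0 < theta <= 1 by rewrite theta_gt0 ltW.
have alpha_rec i : (i <= K)%N -> alpha i = alpha_prev am1 alpha i * theta ^+ j i.
  by move=> /steps[].
have /andP[ak_gt0 ak_le] := step_size_bounds am1_gt0 theta_in alpha_rec kK.
have [_ _ _ res] := steps k kK.
have [b [Bb res_eq]] := resolvent_inclusion (lt0r_neq0 ak_gt0) res.
have normal : (alpha k)^-1 *: (x k - xbar k) - (A2 (x k) - A2 (xbar k))
    = A2 (xbar k) + b + A1 (x k).
  by rewrite res_eq opprB addrACA addrK [b + _]addrC.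
split; first by exists b.
move=> z; apply: (zer_in_Tset ip_inner beta_gt0 coA1 monoA2 monoB ak_gt0 _ Bb normal).
exact: le_trans am1_le.
Qed.
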